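(* Let $a$ and $p$ be trigonometric polynomials such that $a$ satisfies the UEP identities with trigonometric polynomials $b_1,\dots,b_{J_a}$, and $p$ satisfies the UEP identities with trigonometric polynomials $q_1,\dots,q_{J_p}$. Then the product $ap$ satisfies the UEP identities with the family \[\{p\,b_j : j=1,\dots,J_a\}\cup\{a\,q_j : j=1,\dots,J_p\}\cup\{q_j\,b_k : j=1,\dots,J_p,\ k=1,\dots,J_a\}.\] Moreover, if the subdivision schemes associated to $a$, $p$ and $ap$ are convergent and the families $b_1,\dots,b_{J_a}$ and $q_1,\dots,q_{J_p}$ have $v_a$ and $v_p$ vanishing moments respectively, then the family above (for $ap$) has $v=\min\{v_a,v_p\}$ vanishing moments.
   Context: Trigonometric polynomials are written as $p(\omega)=\frac12\sum_{k\in\mathbb{Z}}\mathbf{p}(k)e^{i2k\pi\omega}$ with finitely supported coefficient sequence (mask) $\mathbf{p}$, $\omega\in[0,1)$. A trigonometric polynomial $p$ satisfies the UEP identities with trigonometric polynomials $q_1,\dots,q_J$ if for all $\omega\in[0,1)$: $p(\omega)\overline{p(\omega)}+\sum_{j=1}^J q_j(\omega)\overline{q_j(\omega)}=1$ and $p(\omega)\overline{p(\omega-1/2)}+\sum_{j=1}^J q_j(\omega)\overline{q_j(\omega-1/2)}=0$. The subdivision scheme associated to $p$ is the stationary scheme on $\mathbb{Z}$ with bi-infinite matrix $\mathbf{P}(k,m)=\mathbf{p}(k-2m)$; it is convergent if for each $k$ there is a continuous $\varphi_k$ with $\sup_m|\varphi_k(2^{-j}m)-(\mathbf{P}^j\delta_k)(m)|\to0$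 as $j\to\infty$ ($\delta_k$ the unit sequence at $k$). The number of vanishing moments of a family $q_1,\dots,q_J$ is $v=\min_{j}\mu_j$, where $\mu_j$ is the order of the zero of $q_j$ at $\omega=0$, i.e. $q_j^{(k)}(0)=0$ for $k=0,\dots,\mu_j-1$ and $q_j^{(\mu_j)}(0)\neq0$. *)

From Stdlib Require Import Reals ZArith List.
From Coquelicot Require Import Coquelicot.
Open Scope R_scope.

Definition cexpi (theta : R) : C := (cos theta, sin theta).

(* A finitely supported mask: (lo, [c_0; ...; c_{n-1}]) stands for the
   sequence k |-> c_{k-lo} for lo <= k < lo+n, and 0 elsewhere. *)
Definition mask := (Z * list C)%type.

Definition mask_coef (m : mask) (k : Z) : C :=
  if (fst m <=? k)%Z then nth (Z.to_nat (k - fst m)) (snd m) (RtoC 0) else RtoC 0.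

(* p(w) = 1/2 sum_k p(k) e^{i 2 k pi w} *)
Fixpoint eval_aux (i : Z) (l : list C) (w : R) : C :=
  match l with
  | nil => RtoC 0
  | c :: t => Cplus (Cmult c (cexpi (2 * IZR i * PI * w))) (eval_aux (i + 1) t w)
  end.

Definition eval (m : mask) (w : R) : C := Cmult (RtoC (1/2)) (eval_aux (fst m) (snd m) w).

Definition is_trig_poly (f : R -> C) : Prop := exists m : mask, forall w, f w = eval m w.

Definition csum (l : list C) : C := fold_right Cplus (RtoC 0) l.

Definition UEP (p : R -> C) (qs : list (R -> C)) : Prop :=
  is_trig_poly p /\ (forall q, In q qs -> is_trig_poly q) /\
  (forall w, Cplus (Cmult (p w) (Cconj (p w)))
                   (csum (map (fun q => Cmult (q w) (Cconj (q w))) qs)) = RtoC 1) /\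
  (forall w, Cplus (Cmult (p w) (Cconj (p (w - 1/2))))
                   (csum (map (fun q => Cmult (q w) (Cconj (q (w - 1/2)))) qs)) = RtoC 0).

(* One subdivision step: (P c)(k) = sum_l p(k - 2 l) c(l); only the
   (finitely many) l with k - 2l in the support of the mask contribute. *)
Fixpoint sub_aux (i : Z) (l : list C) (c : Z -> C) (k : Z) : C :=
  match l with
  | nil => RtoC 0
  | a :: t => Cplus (if Z.even (k - i) then Cmult a (c ((k - i) / 2)%Z) else RtoC 0)
                    (sub_aux (i + 1) t c k)
  end.

Definition subdiv (m : mask) (c : Z -> C) : Z -> C := fun k => sub_aux (fst m) (snd m) c k.

Definition delta (k : Z) : Z -> C := fun n => if Z.eqb n k then RtoC 1 else RtoC 0.

Definition subdiv_iter (m : mask) (j : nat) (k : Z) : Z -> C :=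
  Nat.iter j (subdiv m) (delta k).

Definition convergent (m : mask) : Prop :=
  forall k : Z, exists phi : R -> C,
    (forall x, continuous phi x) /\
    (forall eps, 0 < eps -> exists J : nat, forall j : nat, (J <= j)%nat ->
       forall n : Z, Cmod (Cminus (phi (IZR n / 2 ^ j)) (subdiv_iter m j k n)) <= eps).

Definition deriv_vanishes (f : R -> C) (n : nat) : Prop :=
  Derive_n (fun w => Re (f w)) n 0 = 0 /\ Derive_n (fun w => Im (f w)) n 0 = 0.

(* the family fs has v vanishing moments: v = min_j mu_j *)
Definition has_vm (fs : list (R -> C)) (v : nat) : Prop :=
  (forall f, In f fs -> forall k, (k < v)%nat -> deriv_vanishes f k) /\
  (exists f, In f fs /\ ~ deriv_vanishes f v).

(* Both UEP sums of the product family factor as the product of the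
   corresponding sums for a with the b_j and for p with the q_j, so the two
   identities for ap follow from those for a and p.  For the moments, every
   member of the family is f g with g one of the b_j or q_j; by Leibniz's rule
   multiplying by a smooth f keeps the zero of g at 0 of order at least
   ord(g), and of order exactly ord(g) when f(0) <> 0.  As soon as the q_j
   vanish at 0, the first UEP identity at 0 gives |p(0)|^2 = 1, which provides
   that nonzero factor (likewise for a). *)

From Stdlib Require Import Reals ZArith List Lia Lra.
From Coquelicot Require Import Coquelicot.
Open Scope R_scope.

(* These are the real and imaginary parts of trigonometric polynomials; being
   closed under products and derivatives, they are smooth enough for the
   Leibniz rule below. *)

Definition trig_term (t : R * R * R) (w : R) : R :=
  let '(A, B, al) := t in A * cos (al * w) + B * sin (al * w).

Fixpoint trig_sum (l : list (R * R * R)) (w : R) : R :=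
  match l with nil => 0 | t :: r => trig_term t w + trig_sum r w end.

Definition is_trig_sum (f : R -> R) : Prop := exists l, forall w, f w = trig_sum l w.

Definition trig_term_derive (t : R * R * R) : R * R * R :=
  let '(A, B, al) := t in (al * B, - (al * A), al).

Lemma is_derive_trig_term t w : is_derive (trig_term t) w (trig_term (trig_term_derive t) w).
Proof.
  destruct t as [[A B] al]; simpl.
  auto_derive_fun (fun x : R => A * cos (al * x) + B * sin (al * x)).
  intros H; specialize (H w I).
  replace (al * B * cos (al * w) + - (al * A) * sin (al * w)) with
    (A * (al * 1 * - sin (al * w)) + B * (al * 1 * cos (al * w))) by ring.
  exact H.
Qed.

Lemma is_derive_trig_sum l w :
  is_derive (trig_sum l) w (trig_sum (map trig_term_derive l) w).
Proof.
  induction l as [|t l IH]; simpl.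
  - apply (is_derive_const 0).
  - apply (is_derive_plus (trig_term t) (trig_sum l)); [apply is_derive_trig_term | exact IH].
Qed.

Lemma trig_sum_app l1 l2 w : trig_sum (l1 ++ l2) w = trig_sum l1 w + trig_sum l2 w.
Proof. induction l1 as [|t l1 IH]; simpl; [ring | rewrite IH; ring]. Qed.

(* Product-to-sum formulas for cos and sin. *)
Definition trig_term_mul (t s : R * R * R) : list (R * R * R) :=
  let '(A, B, a) := t in let '(C, D, b) := s in
  ((A * C - B * D) / 2, (A * D + B * C) / 2, a + b)
    :: ((A * C + B * D) / 2, (B * C - A * D) / 2, a - b) :: nil.

Lemma trig_sum_term_mul t s w : trig_sum (trig_term_mul t s) w = trig_term t w * trig_term s w.
Proof.
  destruct t as [[A B] a]; destruct s as [[C D] b]; simpl.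
  rewrite !Rmult_plus_distr_r, Rmult_minus_distr_r, cos_plus, sin_plus, cos_minus, sin_minus.
  field.
Qed.

Definition trig_sum_mul (l1 l2 : list (R * R * R)) : list (R * R * R) :=
  flat_map (fun t => flat_map (trig_term_mul t) l2) l1.

Lemma trig_sum_mulE l1 l2 w : trig_sum (trig_sum_mul l1 l2) w = trig_sum l1 w * trig_sum l2 w.
Proof.
  unfold trig_sum_mul; induction l1 as [|t l1 IH]; cbn [flat_map trig_sum]; [ring |].
  rewrite trig_sum_app, IH.
  assert (Ht : trig_sum (flat_map (trig_term_mul t) l2) w = trig_term t w * trig_sum l2 w).
  { clear IH; induction l2 as [|s l2 IH2]; cbn [flat_map trig_sum]; [ring |].
    rewrite trig_sum_app, IH2, trig_sum_term_mul; ring. }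
  rewrite Ht; ring.
Qed.

Lemma is_trig_sum_ext f g : is_trig_sum f -> (forall w, g w = f w) -> is_trig_sum g.
Proof. intros [l Hl] E; exists l; intros w; rewrite E; apply Hl. Qed.

Lemma is_trig_sum_const c : is_trig_sum (fun _ => c).
Proof. exists ((c, 0, 0) :: nil); intros w; simpl; rewrite Rmult_0_l, cos_0; ring. Qed.

Lemma is_trig_sum_plus f g : is_trig_sum f -> is_trig_sum g -> is_trig_sum (fun x => f x + g x).
Proof.
  intros [l1 H1] [l2 H2]; exists (l1 ++ l2); intros w; rewrite trig_sum_app, H1, H2; reflexivity.
Qed.

Lemma is_trig_sum_mult f g : is_trig_sum f -> is_trig_sum g -> is_trig_sum (fun x => f x * g x).
Proof.
  intros [l1 H1] [l2 H2]; exists (trig_sum_mul l1 l2); intros w.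
  rewrite trig_sum_mulE, H1, H2; reflexivity.
Qed.

Lemma is_trig_sum_Derive f : is_trig_sum f -> is_trig_sum (Derive f).
Proof.
  intros [l Hl]; exists (map trig_term_derive l); intros w.
  rewrite (Derive_ext f (trig_sum l)) by exact Hl.
  apply is_derive_unique, is_derive_trig_sum.
Qed.

Lemma ex_derive_trig_sum f x : is_trig_sum f -> ex_derive f x.
Proof.
  intros [l Hl]; apply ex_derive_ext with (trig_sum l); [intros; now rewrite Hl |].
  eexists; apply is_derive_trig_sum.
Qed.

Lemma ex_derive_n_trig_sum f n x : is_trig_sum f -> ex_derive_n f n x.
Proof.
  intros Hf; destruct n as [|n]; simpl; [exact I |].
  apply ex_derive_trig_sum; induction n as [|n IH]; simpl; [exact Hf |].
  apply is_trig_sum_Derive, IH.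
Qed.

Lemma locally_ex_derive_n_trig_sum f n x : is_trig_sum f ->
  locally x (fun y => forall k, (k <= n)%nat -> ex_derive_n f k y).
Proof. intros Hf; apply filter_forall; intros; apply ex_derive_n_trig_sum, Hf. Qed.

Lemma Derive_n_S f k x : Derive_n f (S k) x = Derive_n (Derive f) k x.
Proof.
  rewrite (Derive_n_ext (Derive f) (Derive_n f 1)) by reflexivity.
  rewrite Derive_n_comp; f_equal; lia.
Qed.

(* Leibniz's rule, truncated at the order of the zero of g. *)
Lemma Derive_n_mult_zero_order k : forall f g m x,
  is_trig_sum f -> is_trig_sum g -> (forall i, (i < m)%nat -> Derive_n g i x = 0) ->
  ((k < m)%nat -> Derive_n (fun y => f y * g y) k x = 0) /\
  (k = m -> Derive_n (fun y => f y * g y) k x = f x * Derive_n g m x).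
Proof.
  induction k as [|k IH]; intros f g m x Hf Hg Hgm.
  - split; intros Hk; [| subst; reflexivity].
    specialize (Hgm 0%nat Hk); simpl in *; rewrite Hgm; ring.
  - assert (Hg' : forall i, (i < m - 1)%nat -> Derive_n (Derive g) i x = 0).
    { intros i Hi; rewrite <- Derive_n_S; apply Hgm; lia. }
    destruct (IH (Derive f) g m x (is_trig_sum_Derive _ Hf) Hg Hgm) as [Hf'g _].
    destruct (IH f (Derive g) (m - 1)%nat x Hf (is_trig_sum_Derive _ Hg) Hg') as [Hfg' Hfg'_top].
    rewrite Derive_n_S.
    rewrite (Derive_n_ext _ (fun y => Derive f y * g y + f y * Derive g y))
      by (intros; apply Derive_mult; apply ex_derive_trig_sum; assumption).
    rewrite Derive_n_plus
      by (apply locally_ex_derive_n_trig_sum, is_trig_sum_mult; auto using is_trig_sum_Derive).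
    split; intros Hk.
    + rewrite Hf'g, Hfg' by lia; ring.
    + rewrite Hf'g, Hfg'_top by lia.
      rewrite <- Derive_n_S; replace (S (m - 1)) with m by lia; ring.
Qed.

Definition is_trig_sumC (F : R -> C) : Prop :=
  is_trig_sum (fun w => Re (F w)) /\ is_trig_sum (fun w => Im (F w)).

Definition DeriveC_n (F : R -> C) (n : nat) (x : R) : C :=
  (Derive_n (fun w => Re (F w)) n x, Derive_n (fun w => Im (F w)) n x).

Lemma DeriveC_n_O F x : DeriveC_n F 0 x = F x.
Proof. unfold DeriveC_n; simpl; destruct (F x); reflexivity. Qed.

Lemma deriv_vanishes_DeriveC_n F n : deriv_vanishes F n <-> DeriveC_n F n 0 = RtoC 0.
Proof.
  unfold deriv_vanishes, DeriveC_n, RtoC; split.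
  - intros [-> ->]; reflexivity.
  - intros E; injection E; auto.
Qed.

Lemma DeriveC_n_mult F G n x : is_trig_sumC F -> is_trig_sumC G ->
  DeriveC_n (fun w => Cmult (F w) (G w)) n x =
  (Derive_n (fun w => Re (F w) * Re (G w)) n x - Derive_n (fun w => Im (F w) * Im (G w)) n x,
   Derive_n (fun w => Re (F w) * Im (G w)) n x + Derive_n (fun w => Im (F w) * Re (G w)) n x).
Proof.
  intros [Fr Fi] [Gr Gi]; unfold DeriveC_n; f_equal.
  - rewrite <- Derive_n_minus
      by (apply locally_ex_derive_n_trig_sum, is_trig_sum_mult; assumption).
    apply Derive_n_ext; intros; reflexivity.
  - rewrite <- Derive_n_plus
      by (apply locally_ex_derive_n_trig_sum, is_trig_sum_mult; assumption).
    apply Derive_n_ext; intros; reflexivity.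
Qed.

Lemma DeriveC_n_mult_zero_order F G m x : is_trig_sumC F -> is_trig_sumC G ->
  (forall i, (i < m)%nat -> DeriveC_n G i x = RtoC 0) ->
  (forall k, (k < m)%nat -> DeriveC_n (fun w => Cmult (F w) (G w)) k x = RtoC 0) /\
  DeriveC_n (fun w => Cmult (F w) (G w)) m x = Cmult (F x) (DeriveC_n G m x).
Proof.
  intros HF HG HGm; destruct HF as [Fr Fi], HG as [Gr Gi].
  assert (Hr : forall i, (i < m)%nat -> Derive_n (fun w => Re (G w)) i x = 0)
    by (intros i Hi; specialize (HGm i Hi); injection HGm; auto).
  assert (Hi : forall i, (i < m)%nat -> Derive_n (fun w => Im (G w)) i x = 0)
    by (intros i Hi'; specialize (HGm i Hi'); injection HGm; auto).
  pose proof (fun k => Derive_n_mult_zero_order k _ _ m x Fr Gr Hr) as Hrr.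
  pose proof (fun k => Derive_n_mult_zero_order k _ _ m x Fi Gi Hi) as Hii.
  pose proof (fun k => Derive_n_mult_zero_order k _ _ m x Fr Gi Hi) as Hri.
  pose proof (fun k => Derive_n_mult_zero_order k _ _ m x Fi Gr Hr) as Hir.
  split; [intros k Hk |]; rewrite DeriveC_n_mult by (split; assumption).
  - rewrite (proj1 (Hrr k) Hk), (proj1 (Hii k) Hk), (proj1 (Hri k) Hk), (proj1 (Hir k) Hk).
    unfold RtoC; f_equal; ring.
  - rewrite (proj2 (Hrr m) eq_refl), (proj2 (Hii m) eq_refl),
      (proj2 (Hri m) eq_refl), (proj2 (Hir m) eq_refl).
    unfold DeriveC_n, Cmult; simpl; f_equal; ring.
Qed.

Lemma deriv_vanishes_mult F G m : is_trig_sumC F -> is_trig_sumC G ->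
  (forall i, (i < m)%nat -> deriv_vanishes G i) ->
  forall k, (k < m)%nat -> deriv_vanishes (fun w => Cmult (F w) (G w)) k.
Proof.
  intros HF HG HGm k Hk; apply deriv_vanishes_DeriveC_n.
  apply (DeriveC_n_mult_zero_order F G m 0 HF HG); [| exact Hk].
  intros i Hi; apply deriv_vanishes_DeriveC_n, HGm, Hi.
Qed.

Lemma Cmult_neq_0 x y : x <> RtoC 0 -> y <> RtoC 0 -> Cmult x y <> RtoC 0.
Proof.
  intros Hx Hy Hxy; apply Hy.
  replace y with (Cmult (Cinv x) (Cmult x y)) by (field; exact Hx).
  rewrite Hxy; ring.
Qed.

Lemma not_deriv_vanishes_mult F G m : is_trig_sumC F -> is_trig_sumC G ->
  (forall i, (i < m)%nat -> deriv_vanishes G i) ->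
  F 0 <> RtoC 0 -> ~ deriv_vanishes G m -> ~ deriv_vanishes (fun w => Cmult (F w) (G w)) m.
Proof.
  intros HF HG HGm HF0 HGn; rewrite !deriv_vanishes_DeriveC_n in *.
  rewrite (proj2 (DeriveC_n_mult_zero_order F G m 0 HF HG
                    (fun i Hi => proj1 (deriv_vanishes_DeriveC_n G i) (HGm i Hi)))).
  apply Cmult_neq_0; assumption.
Qed.

Lemma is_trig_sumC_eval_aux l : forall i, is_trig_sumC (eval_aux i l).
Proof.
  induction l as [|c l IH]; intros i; simpl.
  - split; apply is_trig_sum_const.
  - destruct (IH (i + 1)%Z) as [Hr Hi]; split.
    + apply is_trig_sum_ext
        with (fun w => trig_term (fst c, - snd c, 2 * IZR i * PI) w + Re (eval_aux (i + 1) l w)).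
      * apply is_trig_sum_plus; [exists ((fst c, - snd c, 2 * IZR i * PI) :: nil) |];
          [intros; simpl; ring | exact Hr].
      * intros w; unfold Re, cexpi, Cplus, Cmult; simpl; ring.
    + apply is_trig_sum_ext
        with (fun w => trig_term (snd c, fst c, 2 * IZR i * PI) w + Im (eval_aux (i + 1) l w)).
      * apply is_trig_sum_plus; [exists ((snd c, fst c, 2 * IZR i * PI) :: nil) |];
          [intros; simpl; ring | exact Hi].
      * intros w; unfold Im, cexpi, Cplus, Cmult; simpl; ring.
Qed.

Lemma is_trig_sumC_trig_poly f : is_trig_poly f -> is_trig_sumC f.
Proof.
  intros [m Hm]; destruct (is_trig_sumC_eval_aux (snd m) (fst m)) as [Hr Hi]; split.
  - apply is_trig_sum_ext with (fun w => 1 / 2 * Re (eval_aux (fst m) (snd m) w)).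
    + apply is_trig_sum_mult; [apply is_trig_sum_const | exact Hr].
    + intros w; rewrite Hm; unfold eval, Re, Cmult, RtoC; simpl; ring.
  - apply is_trig_sum_ext with (fun w => 1 / 2 * Im (eval_aux (fst m) (snd m) w)).
    + apply is_trig_sum_mult; [apply is_trig_sum_const | exact Hi].
    + intros w; rewrite Hm; unfold eval, Im, Cmult, RtoC; simpl; ring.
Qed.

Fixpoint horner (l : list C) (z : C) : C :=
  match l with nil => RtoC 0 | c :: t => Cplus c (Cmult z (horner t z)) end.

Fixpoint poly_add (l1 l2 : list C) : list C :=
  match l1, l2 with
  | nil, _ => l2
  | _, nil => l1
  | a :: t, b :: s => Cplus a b :: poly_add t s
  end.

Fixpoint poly_mul (l1 l2 : list C) : list C :=
  match l1 with
  | nil => nil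
  | c :: t => poly_add (map (Cmult c) l2) (RtoC 0 :: poly_mul t l2)
  end.

Lemma horner_poly_add l1 : forall l2 z,
  horner (poly_add l1 l2) z = Cplus (horner l1 z) (horner l2 z).
Proof. induction l1 as [|a l1 IH]; intros [|b l2] z; simpl; try ring; rewrite IH; ring. Qed.

Lemma horner_scale c l z : horner (map (Cmult c) l) z = Cmult c (horner l z).
Proof. induction l as [|a l IH]; simpl; [ring | rewrite IH; ring]. Qed.

Lemma horner_poly_mul l1 l2 z : horner (poly_mul l1 l2) z = Cmult (horner l1 z) (horner l2 z).
Proof.
  induction l1 as [|a l1 IH]; simpl; [ring |].
  rewrite horner_poly_add, horner_scale; simpl; rewrite IH; ring.
Qed.

Lemma cexpi_add x y : cexpi (x + y) = Cmult (cexpi x) (cexpi y).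
Proof. unfold cexpi, Cmult; simpl; rewrite cos_plus, sin_plus; f_equal; ring. Qed.

Lemma eval_aux_horner l : forall i w,
  eval_aux i l w = Cmult (cexpi (2 * IZR i * PI * w)) (horner l (cexpi (2 * PI * w))).
Proof.
  induction l as [|c l IH]; intros i w; simpl; [ring |]; rewrite IH.
  replace (2 * IZR (i + 1) * PI * w) with (2 * IZR i * PI * w + 2 * PI * w)
    by (rewrite plus_IZR; ring).
  rewrite cexpi_add; ring.
Qed.

(* The factor 1/2 compensates for the normalisation 1/2 in [eval]. *)
Definition mask_mul (m1 m2 : mask) : mask :=
  ((fst m1 + fst m2)%Z, map (Cmult (RtoC (1 / 2))) (poly_mul (snd m1) (snd m2))).

Lemma eval_mask_mul m1 m2 w : eval (mask_mul m1 m2) w = Cmult (eval m1 w) (eval m2 w).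
Proof.
  unfold eval, mask_mul; simpl.
  rewrite !eval_aux_horner, horner_scale, horner_poly_mul.
  replace (2 * IZR (fst m1 + fst m2) * PI * w)
    with (2 * IZR (fst m1) * PI * w + 2 * IZR (fst m2) * PI * w) by (rewrite plus_IZR; ring).
  rewrite cexpi_add; ring.
Qed.

Lemma is_trig_poly_mult f g :
  is_trig_poly f -> is_trig_poly g -> is_trig_poly (fun w => Cmult (f w) (g w)).
Proof.
  intros [m1 H1] [m2 H2]; exists (mask_mul m1 m2); intros w.
  rewrite eval_mask_mul, H1, H2; reflexivity.
Qed.

Lemma csum_app l1 l2 : csum (l1 ++ l2) = Cplus (csum l1) (csum l2).
Proof. induction l1 as [|c l1 IH]; simpl; [ring | rewrite IH; ring]. Qed.

Lemma csum_map_mult_l {A : Type} (k : C) (g : A -> C) (L : list A) :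
  csum (map (fun x => Cmult k (g x)) L) = Cmult k (csum (map g L)).
Proof. induction L as [|x L IH]; simpl; [ring | rewrite IH; ring]. Qed.

Definition uep_sum (f : R -> C) (L : list (R -> C)) (w u : R) : C :=
  Cplus (Cmult (f w) (Cconj (f u))) (csum (map (fun q => Cmult (q w) (Cconj (q u))) L)).

Definition product_family (a p : R -> C) (B Q : list (R -> C)) : list (R -> C) :=
  map (fun b w => Cmult (p w) (b w)) B
  ++ map (fun q w => Cmult (a w) (q w)) Q
  ++ flat_map (fun q => map (fun b w => Cmult (q w) (b w)) B) Q.

Lemma in_product_family a p B Q f : In f (product_family a p B Q) ->
  (exists b, In b B /\ f = fun w => Cmult (p w) (b w)) \/
  (exists q, In q Q /\ f = fun w => Cmult (a w) (q w)) \/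
  (exists q b, In q Q /\ In b B /\ f = fun w => Cmult (q w) (b w)).
Proof.
  unfold product_family; rewrite !in_app_iff, in_flat_map, !in_map_iff.
  intros [[b [<- Hb]] | [[q [<- Hq]] | [q [Hq Hf]]]].
  - left; eauto.
  - right; left; eauto.
  - apply in_map_iff in Hf; destruct Hf as [b [<- Hb]]; right; right; eauto.
Qed.

Lemma uep_sum_product_family a p B Q w u :
  uep_sum (fun w => Cmult (a w) (p w)) (product_family a p B Q) w u =
  Cmult (uep_sum a B w u) (uep_sum p Q w u).
Proof.
  assert (Hmul : forall f g : R -> C,
    Cmult (Cmult (f w) (g w)) (Cconj (Cmult (f u) (g u))) =
    Cmult (Cmult (f w) (Cconj (f u))) (Cmult (g w) (Cconj (g u))))
    by (intros; rewrite Cmult_conj; ring).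
  assert (Hcross : forall Q',
    csum (map (fun f => Cmult (f w) (Cconj (f u)))
              (flat_map (fun q => map (fun b w => Cmult (q w) (b w)) B) Q')) =
    Cmult (csum (map (fun q => Cmult (q w) (Cconj (q u))) Q'))
          (csum (map (fun b => Cmult (b w) (Cconj (b u))) B))).
  { induction Q' as [|q Q' IH]; simpl; [ring |].
    rewrite map_app, csum_app, IH, map_map, (map_ext _ _ (Hmul q)), csum_map_mult_l; ring. }
  unfold uep_sum, product_family; rewrite !map_app, !csum_app, Hcross, !map_map.
  rewrite (map_ext _ _ (Hmul p)), (map_ext _ _ (Hmul a)), !csum_map_mult_l, Hmul; ring.
Qed.

Lemma UEP_mult a p B Q : UEP a B -> UEP p Q ->
  UEP (fun w => Cmult (a w) (p w)) (product_family a p B Q).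
Proof.
  intros [Ta [TB [Ia Sa]]] [Tp [TQ [Ip Sp]]].
  split; [apply is_trig_poly_mult; assumption |]; split; [| split].
  - intros f Hf.
    destruct (in_product_family _ _ _ _ _ Hf)
      as [[b [Hb ->]] | [[q [Hq ->]] | [q [b [Hq [Hb ->]]]]]];
      apply is_trig_poly_mult; auto.
  - intros w; change (uep_sum (fun w => Cmult (a w) (p w)) (product_family a p B Q) w w = RtoC 1).
    rewrite uep_sum_product_family; unfold uep_sum; rewrite Ia, Ip; ring.
  - intros w.
    change (uep_sum (fun w => Cmult (a w) (p w)) (product_family a p B Q) w (w - 1 / 2) = RtoC 0).
    rewrite uep_sum_product_family; unfold uep_sum; rewrite Sa; ring.
Qed.

Lemma UEP_nonzero_at_0 f L : UEP f L -> (forall g, In g L -> g 0 = RtoC 0) -> f 0 <> RtoC 0.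
Proof.
  intros [_ [_ [H1 _]]] HL Hf0; specialize (H1 0).
  rewrite (map_ext_in _ (fun g => Cmult (RtoC 0) (g 0))), csum_map_mult_l, Hf0 in H1
    by (intros g Hg; rewrite (HL g Hg); ring).
  assert (H01 : RtoC 0 = RtoC 1) by (rewrite <- H1; ring).
  injection H01; lra.
Qed.

Lemma deriv_vanishes_O f : deriv_vanishes f 0 <-> f 0 = RtoC 0.
Proof. rewrite deriv_vanishes_DeriveC_n, DeriveC_n_O; reflexivity. Qed.

Lemma UEP_has_vm_nonzero_at_0 f L v : UEP f L -> has_vm L v -> (0 < v)%nat -> f 0 <> RtoC 0.
Proof.
  intros Hf [HL _] Hv; apply (UEP_nonzero_at_0 f L Hf).
  intros g Hg; apply deriv_vanishes_O, (HL g Hg), Hv.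
Qed.

Lemma UEP_is_trig_sumC f L : UEP f L ->
  is_trig_sumC f /\ forall g, In g L -> is_trig_sumC g.
Proof.
  intros [Hf [HL _]]; split; [| intros g Hg];
    apply is_trig_sumC_trig_poly; auto.
Qed.

Lemma product_family_deriv_vanishes a p B Q va vp : UEP a B -> UEP p Q ->
  has_vm B va -> has_vm Q vp ->
  forall f, In f (product_family a p B Q) ->
  forall k, (k < Nat.min va vp)%nat -> deriv_vanishes f k.
Proof.
  intros [Ta TB]%UEP_is_trig_sumC [Tp TQ]%UEP_is_trig_sumC [VB _] [VQ _] f Hf k Hk.
  destruct (in_product_family _ _ _ _ _ Hf)
    as [[b [Hb ->]] | [[q [Hq ->]] | [q [b [Hq [Hb ->]]]]]].
  - apply (deriv_vanishes_mult p b va); auto; lia.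
  - apply (deriv_vanishes_mult a q vp); auto; lia.
  - apply (deriv_vanishes_mult q b va); auto; lia.
Qed.

Lemma product_family_not_deriv_vanishes a p B Q va vp : UEP a B -> UEP p Q ->
  has_vm B va -> has_vm Q vp ->
  exists f, In f (product_family a p B Q) /\ ~ deriv_vanishes f (Nat.min va vp).
Proof.
  intros UA UP VB VQ.
  destruct (UEP_is_trig_sumC a B UA) as [Ta TB], (UEP_is_trig_sumC p Q UP) as [Tp TQ].
  destruct VB as [VBlow [b [Hb NB]]], VQ as [VQlow [q [Hq NQ]]].
  destruct (le_lt_dec va vp) as [Hle | Hlt].
  - rewrite Nat.min_l by exact Hle; destruct vp as [|vp].
    + replace va with 0%nat in * by lia.
      exists (fun w => Cmult (q w) (b w)); split.
      * apply in_or_app; right; apply in_or_app; right; apply in_flat_map.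
        exists q; split; [exact Hq |].
        apply (in_map (fun b w => Cmult (q w) (b w))), Hb.
      * apply not_deriv_vanishes_mult; auto.
        rewrite <- deriv_vanishes_O; exact NQ.
    + exists (fun w => Cmult (p w) (b w)); split.
      * apply in_or_app; left; apply (in_map (fun b w => Cmult (p w) (b w))), Hb.
      * apply not_deriv_vanishes_mult; auto.
        apply (UEP_has_vm_nonzero_at_0 p Q (S vp)); [exact UP | | lia].
        split; [exact VQlow | exists q; auto].
  - rewrite Nat.min_r by lia.
    exists (fun w => Cmult (a w) (q w)); split.
    + apply in_or_app; right; apply in_or_app; left.
      apply (in_map (fun q w => Cmult (a w) (q w))), Hq.
    + apply not_deriv_vanishes_mult; auto.
      apply (UEP_has_vm_nonzero_at_0 a B va); [exact UA | | lia].
      split; [exact VBlow | exists b; auto].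
Qed.

Theorem theorem2 (ma mp : mask) (bs qs : list mask) :
  let a := eval ma in
  let p := eval mp in
  let B := map eval bs in
  let Q := map eval qs in
  let fam := map (fun b w => Cmult (p w) (b w)) B
             ++ map (fun q w => Cmult (a w) (q w)) Q
             ++ flat_map (fun q => map (fun b w => Cmult (q w) (b w)) B) Q in
  UEP a B -> UEP p Q ->
  UEP (fun w => Cmult (a w) (p w)) fam /\
  (forall (mab : mask) (va vp : nat),
     (forall w, eval mab w = Cmult (a w) (p w)) ->
     convergent ma -> convergent mp -> convergent mab ->
     has_vm B va -> has_vm Q vp ->
     has_vm fam (Nat.min va vp)).
Proof.
  intros a p B Q fam UA UP.
  change fam with (product_family a p B Q).
  split; [apply UEP_mult; assumption |].
  intros mab va vp _ _ _ _ VB VQ; split.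
  - exact (product_family_deriv_vanishes a p B Q va vp UA UP VB VQ).
  - exact (product_family_not_deriv_vanishes a p B Q va vp UA UP VB VQ).
Qed.
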